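(* There exist partition exchange economies with cycle bound $\Delta=3$ and arbitrarily large $|V|$ whose $\big(\tfrac{|V|}{10}-1\big)$-supplemented core is empty.
   Context: A partition exchange economy consists of organizations $N=\{1,\dots,n\}$; pairwise disjoint finite sets $V^1,\dots,V^n$, $V=\bigcup_iV^i$; patient sets $U^i\subseteq V^i$; a directed compatibility graph $\mathcal G=(V,E)$; and a cycle bound $\Delta$. An exchange among $W\subseteq V$ is a set of vertex-disjoint directed cycles of length at most $\Delta$ in $\mathcal G[W]$; $u_i(\mathcal E)$ is the number of vertices of $U^i$ lying on cycles of $\mathcal E$. Given a finite set $V^0$ of new vertices (additional altruistic donors, in no organization), $\mathcal G^{+V^0}$ adds these vertices, an arc from every other vertex into each $a\in V^0$, and for each $a\in V^0$ arcs from $a$ to an arbitrarily chosen set of vertices; exchanges in $\mathcal G^{+V^0}$ are sets of vertex-disjoint cycles of length $\le\Delta$ in it. A nonempty coalition $P\subseteq N$ blocks an exchange $\mathcal E$ if some exchange $\mathcal E'$ among $\bigcup_{i\in P}V^i$ (in $\mathcal G$) has $u_i(\mathcal E')>u_i(\mathcal E)$ for all $i\in P$. An exchange of $\mathcal G^{+V^0}$ blocked by no coalition is in the $V^0$-supplemented core. The $d$-supplemented core is nonempty if for some $V^0$ with $|V^0|\le d$ and some choice of its out-arcs the $V^0$-supplemented core is nonempty; otherwise it is empty. *)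

From mathcomp Require Import all_boot all_order all_algebra.
Set Implicit Arguments. Unset Strict Implicit. Unset Printing Implicit Defensive.
Import GRing.Theory Num.Theory.

(* Vertex set V = vtx; organization of a vertex = org v (so the V^i are the
   fibres of org, pairwise disjoint, covering V); patients U = union of U^i,
   with U^i = patient :&: V^i; directed compatibility graph = arc (no loops). *)
Record economy := Economy {
  n_org : nat;
  vtx : finType;
  org : vtx -> 'I_n_org;
  patient : {set vtx};
  arc : rel vtx;
  arc_irr : irreflexive arc
}.

(* An exchange among W in the digraph e with cycle bound delta: a list of
   vertex-disjoint directed cycles (each given by its cyclic vertex sequence),
   each of length between 1 and delta, all vertices in W. *)
Definition is_exchange (T : finType) (e : rel T) (delta : nat) (W : {set T})
    (X : seq (seq T)) : bool :=
  [&& uniq (flatten X),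
      all (fun c => [&& 0 < size c, size c <= delta & cycle e c]) X &
      all (fun v => v \in W) (flatten X)].

(* u_i: number of patients of organization i lying on cycles of X, where the
   economy's vertices are embedded into T by emb. *)
Definition util (ec : economy) (T : finType) (emb : vtx ec -> T)
    (i : 'I_(n_org ec)) (X : seq (seq T)) : nat :=
  #|[set v : vtx ec | [&& v \in patient ec, org v == i & emb v \in flatten X]]|.

(* G^{+V^0} with V^0 = 'I_k: arcs from every other vertex into each altruist,
   and from altruist a to the chosen set S a of original vertices. *)
Definition supp_arc (ec : economy) (k : nat) (S : 'I_k -> {set vtx ec})
    : rel (vtx ec + 'I_k)%type :=
  fun x y => match x, y with
  | inl a, inl b => @arc ec a b
  | inl _, inr _ => true
  | inr a, inr b => a != b
  | inr a, inl b => b \in S a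
  end.

Definition blocks (ec : economy) (delta : nat) (P : {set 'I_(n_org ec)})
    (ui : 'I_(n_org ec) -> nat) : Prop :=
  P != set0 /\
  exists X' : seq (seq (vtx ec)),
    is_exchange (@arc ec) delta [set v | org v \in P] X' /\
    forall i, i \in P -> ui i < util id i X'.

(* The V^0-supplemented core (|V^0| = k, out-arcs S) is empty. *)
Definition supp_core_empty_for (ec : economy) (delta k : nat)
    (S : 'I_k -> {set vtx ec}) : Prop :=
  forall X : seq (seq (vtx ec + 'I_k)%type),
    is_exchange (supp_arc S) delta setT X ->
    exists P, blocks delta P (fun i => util inl i X).

Definition supp_core_empty (ec : economy) (delta : nat) (d : rat) : Prop :=
  forall k : nat, (k%:R <= d)%R ->
  forall S : 'I_k -> {set vtx ec}, supp_core_empty_for delta S.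

From mathcomp Require Import all_boot all_order all_algebra.
From mathcomp Require Import lra.
Import GRing.Theory Num.Theory.
Set Implicit Arguments. Unset Strict Implicit. Unset Printing Implicit Defensive.

(* The gadget has six patients, owned in pairs by three organizations, and
   exactly three short cycles, the triangles 012, 234 and 451. The triangles
   pairwise intersect, so an exchange of the gadget covers nothing or a single
   triangle, and whichever it is, the two owners of the next triangle strictly
   gain by switching to it: the gadget has an empty core.
   Take N disjoint copies of the gadget, so |V| = 6N. A supplementary altruist
   lies on a cycle of length at most 3, which meets at most one copy; fewer
   than N altruists (and |V|/10 - 1 < N) leave some copy untouched, and the
   exchange restricted to that copy is blocked inside it. *)

Lemma cycle3_adjacent (T : eqType) (e : rel T) (c : seq T) x y :
  cycle e c -> size c <= 3 -> x \in c -> y \in c -> [|| x == y, e x y | e y x].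
Proof.
case: c => [|a [|b [|d []]]] //=; rewrite !inE ?andbT.
- by move=> _ _ /eqP-> /eqP->; rewrite eqxx.
- move=> /andP[eab eba] _ /orP[]/eqP-> /orP[]/eqP->;
  by rewrite ?eqxx ?eab ?eba ?orbT.
- move=> /and3P[eab ebd eda] _ /or3P[]/eqP-> /or3P[]/eqP->;
  by rewrite ?eqxx ?eab ?ebd ?eda ?orbT.
Qed.

Lemma uniq_flatten_mem_eq (T : eqType) (Y : seq (seq T)) c1 c2 x :
  uniq (flatten Y) -> c1 \in Y -> c2 \in Y -> x \in c1 -> x \in c2 -> c1 = c2.
Proof.
elim: Y => [|c Y IH] //=; rewrite cat_uniq => /and3P[_ disj uY].
have notin c' : c' \in Y -> x \in c' -> x \notin c.
  move=> Yc' xc'; apply: contra disj => xc.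
  by apply/hasP; exists x => //; apply/flattenP; exists c'.
rewrite !inE => /orP[/eqP-> | Yc1] /orP[/eqP-> | Yc2] // xc1 xc2.
- by have := notin _ Yc2 xc2; rewrite xc1.
- by have := notin _ Yc1 xc1; rewrite xc2.
- exact: IH.
Qed.

Lemma map_of_image (A : Type) (T : eqType) (f : A -> T) (s : seq T) :
  (forall x, x \in s -> exists a, x = f a) -> exists s', s = map f s'.
Proof.
elim: s => [|x s IH] fs; first by exists [::].
have [a ->] := fs x (mem_head _ _).
have [s' ->] : exists s', s = map f s' by apply: IH => y ys; apply: fs; rewrite inE ys orbT.
by exists (a :: s').
Qed.

Lemma card_set_uniq (T : finType) (s : seq T) (P : pred T) :
  uniq s -> #|[set x in s | P x]| = count P s.
Proof.
move=> us; rewrite -size_filter -(card_uniqP (filter_uniq P us)).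
by apply: eq_card => x; rewrite inE mem_filter andbC.
Qed.

Lemma set_flatten_closed (A : finType) (T : eqType) (emb : A -> T)
    (P : {set A} -> Prop) (Y : seq (seq T)) :
  P set0 -> (forall B C, P B -> P C -> [disjoint B & C] -> P (B :|: C)) ->
  uniq (flatten Y) -> (forall c, c \in Y -> P [set a | emb a \in c]) ->
  P [set a | emb a \in flatten Y].
Proof.
move=> P0 PU; elim: Y => [|c Y IH] /=.
  by move=> _ _; rewrite (_ : [set a | _] = set0) //; apply/setP => a; rewrite !inE.
rewrite cat_uniq => /and3P[_ disj uY] Pc.
have -> : [set a | emb a \in c ++ flatten Y] =
          [set a | emb a \in c] :|: [set a | emb a \in flatten Y].
  by apply/setP => a; rewrite !inE mem_cat.
apply: PU.
- exact: Pc (mem_head _ _).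
- by apply: IH => // c' Yc'; apply: Pc; rewrite inE Yc' orbT.
- rewrite -setI_eq0; apply/eqP/setP => a; rewrite !inE; apply/negP => /andP[ac aY].
  by case/hasP: disj; exists (emb a).
Qed.

Definition gadget := 'I_6.

(* Unlike [inord n], this term reduces, so the finite checks below are proved
   by computation. *)
Definition gadget_vertex (n : nat) : gadget := Ordinal (ltn_pmod n (isT : 0 < 6)).

Definition gadget_vertices : seq gadget := map gadget_vertex (iota 0 6).

Definition gadget_arc : rel gadget := fun x y =>
  (val x, val y) \in [:: (0, 1); (1, 2); (2, 0); (2, 3); (3, 4); (4, 2); (4, 5); (5, 1); (1, 4)].

Lemma gadget_org_subproof (g : gadget) : (val g)./2 < 3.
Proof. by rewrite ltn_half_double; exact: ltn_ord. Qed.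

Definition gadget_org (g : gadget) : 'I_3 := Ordinal (gadget_org_subproof g).

Definition gadget_triangles : seq (seq gadget) :=
  map (map gadget_vertex) [:: [:: 0; 1; 2]; [:: 2; 3; 4]; [:: 4; 5; 1]].

Definition gadget_cover (W : {set gadget}) : Prop :=
  W = set0 \/ exists2 t, t \in gadget_triangles & W = [set x in t].

Definition gadget_payoff (W : {set gadget}) (q : 'I_3) : nat :=
  #|[set g in W | gadget_org g == q]|.

Lemma mem_gadget_vertices (x : gadget) : x \in gadget_vertices.
Proof.
apply/mapP; exists (val x); first by rewrite mem_iota ltn_ord.
by apply: val_inj; rewrite /= modn_small.
Qed.

Lemma gadget_vertices_all (P : pred gadget) : all P gadget_vertices -> forall x, P x.
Proof. by move=> /allP allP x; apply: allP (mem_gadget_vertices x). Qed.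

Lemma gadget_arc_irr : irreflexive gadget_arc.
Proof.
by move=> x; apply/negbTE; apply: (@gadget_vertices_all (fun x => ~~ gadget_arc x x)).
Qed.

Lemma gadget_triangleP t : t \in gadget_triangles ->
  [/\ uniq t, size t = 3 & cycle gadget_arc t].
Proof.
have /allP triangles_ok :
  all (fun t => [&& uniq t, size t == 3 & cycle gadget_arc t]) gadget_triangles by [].
by move=> /triangles_ok /and3P[? /eqP ? ?].
Qed.

Lemma gadget_triangles_meet t1 t2 :
  t1 \in gadget_triangles -> t2 \in gadget_triangles -> exists2 x, x \in t1 & x \in t2.
Proof.
have /allP meet : all (fun t1 => all (fun t2 => has (mem t2) t1) gadget_triangles)
  gadget_triangles by [].
by move=> /meet /allP m /m /hasP.
Qed.

Lemma gadget_short_cycle c : 0 < size c <= 3 -> cycle gadget_arc c ->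
  exists2 t, t \in gadget_triangles & c =i t.
Proof.
have check : all (fun x => all (fun y => all (fun z =>
    ~~ cycle gadget_arc [:: x; y] &&
    (cycle gadget_arc [:: x; y; z] ==> has (perm_eq [:: x; y; z]) gadget_triangles))
  gadget_vertices) gadget_vertices) gadget_vertices by [].
have short_cycles x y z :=
  gadget_vertices_all (gadget_vertices_all (gadget_vertices_all check x) y) z.
case: c => [|x [|y [|z []]]] // _.
- by rewrite /= gadget_arc_irr.
- by have /andP[/negbTE->] := short_cycles x y x.
- move=> cyc; have /andP[_ /implyP/(_ cyc)/hasP[t tri]] := short_cycles x y z.
  by move/perm_mem; exists t.
Qed.

Lemma gadget_cover0 : gadget_cover set0.
Proof. by left. Qed.

Lemma gadget_coverU B C : gadget_cover B -> gadget_cover C -> [disjoint B & C] ->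
  gadget_cover (B :|: C).
Proof.
case=> [-> coverC _ | [t1 tri1 ->]]; first by rewrite set0U.
case=> [-> _ | [t2 tri2 ->] disj]; first by rewrite setU0; right; exists t1.
have [x xt1 xt2] := gadget_triangles_meet tri1 tri2.
by move: disj; rewrite -setI_eq0 => /eqP/setP/(_ x); rewrite !inE xt1 xt2.
Qed.

Lemma gadget_cycle_cover c : 0 < size c <= 3 -> cycle gadget_arc c ->
  gadget_cover [set x in c].
Proof.
move=> size_c /(gadget_short_cycle size_c)[t tri ct].
by right; exists t => //; apply/setP => x; rewrite !inE ct.
Qed.

Lemma gadget_core_empty W : gadget_cover W ->
  exists2 t, t \in gadget_triangles &
    {in t, forall g,
      gadget_payoff W (gadget_org g) < gadget_payoff [set x in t] (gadget_org g)}.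
Proof.
have payoff_tri t q : t \in gadget_triangles ->
    gadget_payoff [set x in t] q = count (fun x => gadget_org x == q) t.
  case/gadget_triangleP => ut _ _; rewrite -card_set_uniq //.
  by apply: eq_card => x; rewrite !inE.
case=> [-> | [t' tri' ->]].
  exists (head [::] gadget_triangles) => [|g tg]; first exact: mem_head.
  rewrite payoff_tri ?mem_head // (_ : gadget_payoff set0 _ = 0) -?has_count.
    by apply/hasP; exists g.
  by apply: eq_card0 => x; rewrite !inE.
have /allP blocked : all (fun t' => has (fun t => all (fun g =>
    count (fun x => gadget_org x == gadget_org g) t' <
    count (fun x => gadget_org x == gadget_org g) t) t) gadget_triangles)
  gadget_triangles by [].
have /hasP[t tri /allP gain] := blocked t' tri'.
by exists t => // g tg; rewrite !payoff_tri //; apply: gain.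
Qed.

Definition copies_arc (N : nat) : rel (gadget * 'I_N) :=
  fun v w => (v.2 == w.2) && gadget_arc v.1 w.1.

Lemma copies_arc_irr N : irreflexive (@copies_arc N).
Proof. by move=> v; rewrite /copies_arc gadget_arc_irr andbF. Qed.

Definition gadget_copies (N : nat) : economy :=
  Economy (fun v : gadget * 'I_N => enum_rank (v.2, gadget_org v.1)) setT (@copies_arc_irr N).

Lemma card_gadget_copies N : #|vtx (gadget_copies N)| = 6 * N.
Proof. by rewrite card_prod !card_ord. Qed.

Lemma util_gadget_copies N (T : finType) (emb : gadget * 'I_N -> T) j q Z :
  util (ec := gadget_copies N) emb (enum_rank (j, q)) Z =
  gadget_payoff [set g | emb (g, j) \in flatten Z] q.
Proof.
have pair_inj : injective (pair^~ j : gadget -> gadget * 'I_N) by move=> a b [].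
rewrite /util /gadget_payoff -(card_imset _ pair_inj); apply: eq_card => -[g j'].
rewrite !inE /= (inj_eq enum_rank_inj) xpair_eqE andbC.
apply/and3P/imsetP => [[embZ /eqP ej /eqP<-] | [g' ]].
  by subst j'; exists g; rewrite ?inE ?embZ ?eqxx.
by rewrite !inE => /andP[embZ /eqP<-] [-> ->]; split; rewrite ?eqxx.
Qed.

Section SupplementedCopies.

Variables (N k : nat) (S : 'I_k -> {set gadget * 'I_N}).

Local Notation V := (gadget * 'I_N + 'I_k)%type.
Local Notation sarc := (@supp_arc (gadget_copies N) k S).

Lemma supp_arc_copy (v w : gadget * 'I_N) : sarc (inl v) (inl w) -> v.2 = w.2.
Proof. by case/andP=> /eqP. Qed.

Lemma short_cycle_copy (c : seq V) v w :
  cycle sarc c -> size c <= 3 -> inl v \in c -> inl w \in c -> v.2 = w.2.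
Proof.
move=> cyc size_c vc wc.
have := cycle3_adjacent cyc size_c vc wc.
by case/or3P=> [/eqP[->] | /supp_arc_copy | /supp_arc_copy ->].
Qed.

Variable X : seq (seq V).
Hypothesis exchX : is_exchange sarc 3 setT X.

Lemma uniq_exchange : uniq (flatten X).
Proof. by case/and3P: exchX. Qed.

Lemma short_cycle_exchange c : c \in X -> [&& 0 < size c, size c <= 3 & cycle sarc c].
Proof. by case/and3P: exchX => _ /allP cycX _ /cycX. Qed.

Definition serves (a : 'I_k) (j : 'I_N) : bool :=
  has (fun c => (inr a \in c) && [exists g, inl (g, j) \in c]) X.

Definition tainted (j : 'I_N) : bool := [exists a, serves a j].

Lemma serves_fun a j j' : serves a j -> serves a j' -> j = j'.
Proof.
move=> /hasP[c Xc /andP[ac /existsP[g gc]]] /hasP[c' Xc' /andP[ac' /existsP[g' gc']]].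
have ec := uniq_flatten_mem_eq uniq_exchange Xc Xc' ac ac'; subst c'.
case/and3P: (short_cycle_exchange Xc) => _ size_c cyc.
exact: short_cycle_copy cyc size_c gc gc'.
Qed.

Lemma card_tainted (j0 : 'I_N) : #|[set j | tainted j]| <= k.
Proof.
pose copy_of a := odflt j0 [pick j | serves a j].
have : [set j | tainted j] \subset copy_of @: setT.
  apply/subsetP => j; rewrite inE => /existsP[a aj]; apply/imsetP; exists a => //.
  rewrite /copy_of; case: pickP => [j' aj' | /(_ j)]; last by rewrite aj.
  exact: serves_fun aj aj'.
move/subset_leq_card/leq_trans; apply.
by rewrite (leq_trans (leq_imset_card _ _)) // cardsT card_ord.
Qed.

Lemma exists_untainted : k < N -> exists j, ~~ tainted j.
Proof.
move=> ltkN; have j0 : 'I_N := Ordinal (leq_ltn_trans (leq0n k) ltkN).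
apply/existsP; rewrite -negb_forall; apply: contraL ltkN => /forallP all_tainted.
rewrite -leqNgt -[N]card_ord -cardsT; apply: leq_trans (card_tainted j0).
by apply/subset_leq_card/subsetP => j _; rewrite inE all_tainted.
Qed.

Lemma untainted_cycle_cover j c : ~~ tainted j -> c \in X ->
  gadget_cover [set g | inl (g, j) \in c].
Proof.
move=> untj Xc.
have [/existsP[g0 g0c] | /existsPn none] := boolP [exists g, inl (g, j) \in c]; last first.
  have -> : [set g | inl (g, j) \in c] = set0.
    by apply/setP => g; rewrite !inE (negbTE (none g)).
  exact: gadget_cover0.
case/and3P: (short_cycle_exchange Xc) => size_pos size_c cyc.
pose lift g : V := inl (g, j).
have lift_inj : injective lift by move=> a b [].
have in_copy x : x \in c -> exists g, x = lift g.
  case: x => [[g j'] xc | a ac].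
    by exists g; rewrite [j'](short_cycle_copy cyc size_c xc g0c).
  case/negP: untj; apply/existsP; exists a; apply/hasP; exists c => //.
  by rewrite ac; apply/existsP; exists g0.
have [c' ec] := map_of_image in_copy; subst c.
rewrite size_map in size_pos size_c; rewrite cycle_map (@eq_cycle _ _ gadget_arc) in cyc;
  last by move=> g h; rewrite /= /copies_arc eqxx.
have -> : [set g | lift g \in map lift c'] = [set x in c'].
  by apply/setP => g; rewrite !inE (mem_map lift_inj).
by apply: gadget_cycle_cover; rewrite ?size_pos.
Qed.

Lemma untainted_cover j : ~~ tainted j -> gadget_cover [set g | inl (g, j) \in flatten X].
Proof.
move=> untj; apply: set_flatten_closed uniq_exchange _ => [|B C|c Xc].
- exact: gadget_cover0.
- exact: gadget_coverU.
- exact: untainted_cycle_cover.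
Qed.

Lemma untainted_blocked j : ~~ tainted j ->
  exists P, blocks 3 P (fun i => util (ec := gadget_copies N) inl i X).
Proof.
move=> /untainted_cover /gadget_core_empty[t tri gain].
have [ut size_t cyc] := gadget_triangleP tri.
pose P := [set enum_rank (j, gadget_org g) | g in t].
have pair_inj : injective (pair^~ j : gadget -> gadget * 'I_N) by move=> a b [].
exists P; split.
  apply/set0Pn; exists (enum_rank (j, gadget_org (nth (gadget_vertex 0) t 0))).
  by apply: imset_f; rewrite mem_nth ?size_t.
exists [:: map (pair^~ j) t]; split.
  rewrite /is_exchange /= cats0 map_inj_uniq // ut size_map size_t cycle_map /= andbT.
  apply/andP; split.
    by rewrite (@eq_cycle _ _ gadget_arc) // => g h; rewrite /= /copies_arc eqxx.
  by apply/allP => _ /mapP[g tg ->]; rewrite inE; apply: imset_f.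
move=> _ /imsetP[g tg ->]; rewrite !util_gadget_copies.
have -> : [set g' | (g', j) \in flatten [:: map (pair^~ j) t]] = [set x in t].
  by apply/setP => g'; rewrite !inE /= cats0 (mem_map pair_inj).
exact: gain.
Qed.

End SupplementedCopies.

Lemma altruists_lt_copies (k N : nat) : (k%:R <= (6 * N)%:R / 10 - 1 :> rat)%R -> k < N.
Proof.
rewrite natrM -(ltr_nat rat) => hk.
by move: (ler0n rat N); lra.
Qed.

Theorem mainTheorem3 :
  forall m : nat, exists ec : economy,
    m <= #|vtx ec| /\
    supp_core_empty ec 3 (#|vtx ec|%:R / 10 - 1)%R.
Proof.
move=> m; exists (gadget_copies m); rewrite card_gadget_copies.
split=> [|k /altruists_lt_copies ltkm S X exchX]; first exact: leq_pmull.
have [j untj] := exists_untainted exchX ltkm.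
exact: (untainted_blocked exchX untj).
Qed.
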